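(* Let $d\ge1$, $0<\mu\le L$, let $A\in\mathbb{R}^{d\times d}$ be symmetric with $\mu I\preceq A\preceq LI$, $b\in\mathbb{R}^d$, $f(x)=\frac12x^\top Ax+b^\top x$, and let $\{x_t\},\{G_t\}$ be generated by Sharpened-BFGS for quadratics from an arbitrary $x_0$, assuming $\nabla f(x_t)\neq0$ for all $t$ considered. Then for all $t\ge1$, $$\lambda_t\le\left(1-\frac{\mu}{dL}\right)^{\frac{t(t-1)}{4}}\left(\frac{dL}{t\mu}\right)^{\frac t2}\lambda_0,$$ where $\lambda_t:=\lambda_f(x_t)$.
   Context: For symmetric positive definite $A,G\in\mathbb{R}^{d\times d}$ and $u\in\mathbb{R}^d\setminus\{0\}$, the BFGS operator is $\mathrm{BFGS}(A,G,u):=G-\frac{Guu^\top G}{u^\top Gu}+\frac{Auu^\top A}{u^\top Au}$. The greedy vector is $\bar u(A,G):=\arg\max_{u\in\{e_1,\dots,e_d\}}\frac{u^\top Gu}{u^\top Au}$ (ties broken arbitrarily). The Newton decrement is $\lambda_f(x):=\sqrt{\nabla f(x)^\top\nabla^2 f(x)^{-1}\nabla f(x)}$. Sharpened-BFGS for quadratics: set $G_0=LI$; for $t=0,1,2,\dots$: $x_{t+1}=x_t-G_t^{-1}\nabla f(x_t)$, $s_t=x_{t+1}-x_t$, $\bar G_t=\mathrm{BFGS}(A,G_t,s_t)$, $\bar u=\bar u(A,\bar G_t)$, $G_{t+1}=\mathrm{BFGS}(A,\bar G_t,\bar u)$. *)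

From HB Require Import structures.
From mathcomp Require Import all_boot all_order all_algebra.
From mathcomp Require Import reals exp.
Set Implicit Arguments. Unset Strict Implicit. Unset Printing Implicit Defensive.
Import Order.TTheory GRing.Theory Num.Theory.
Local Open Scope ring_scope.

Section Defs.
Variable R : realType.

Definition qf (d : nat) (M : 'M[R]_d) (u v : 'cV[R]_d) : R := (u^T *m M *m v) 0 0.

Definition BFGS (d : nat) (A G : 'M[R]_d) (u : 'cV[R]_d) : 'M[R]_d :=
  G - (qf G u u)^-1 *: (G *m u *m u^T *m G) + (qf A u u)^-1 *: (A *m u *m u^T *m A).

Definition e_ (d : nat) (i : 'I_d) : 'cV[R]_d := delta_mx i 0.

Definition greedy_index (d : nat) (A G : 'M[R]_d) (i : 'I_d) : Prop :=
  forall j : 'I_d, qf G (e_ j) (e_ j) / qf A (e_ j) (e_ j)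
                   <= qf G (e_ i) (e_ i) / qf A (e_ i) (e_ i).

(* gradient of f(x) = 1/2 x^T A x + b^T x (A symmetric) *)
Definition grad_quad (d : nat) (A : 'M[R]_d) (b x : 'cV[R]_d) : 'cV[R]_d :=
  A *m x + b.

(* Newton decrement of f at x; the Hessian of f is A *)
Definition newton_decr (d : nat) (A : 'M[R]_d) (b x : 'cV[R]_d) : R :=
  Num.sqrt (qf (invmx A) (grad_quad A b x) (grad_quad A b x)).

Definition sharpened_bfgs_quad (d : nat) (L : R) (A : 'M[R]_d) (b : 'cV[R]_d)
  (x : nat -> 'cV[R]_d) (G : nat -> 'M[R]_d) : Prop :=
  G 0%N = L%:M /\
  forall t : nat,
    x t.+1 = x t - invmx (G t) *m grad_quad A b (x t) /\
    let s := x t.+1 - x t in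
    let Gbar := BFGS A (G t) s in
    exists i : 'I_d, greedy_index A Gbar i /\ G t.+1 = BFGS A Gbar (e_ i).

End Defs.

From HB Require Import structures.
From mathcomp Require Import all_boot all_order all_algebra.
From mathcomp Require Import reals exp.
From mathcomp Require Import ring lra.
Import Order.TTheory GRing.Theory Num.Theory.
Local Open Scope ring_scope.
Set Implicit Arguments. Unset Strict Implicit. Unset Printing Implicit Defensive.

(* For a symmetric approximation G with A <= G, the quantity
   sigma(G) = tr(A^-1 G) - d is nonnegative, and a BFGS update along u
   lowers it by |Gu|^2_{A^-1} / u'Gu - 1 >= u'Gu / u'Au - 1 >= 0, keeping
   A <= G.  Along the quasi-Newton step s_t this drop D_t bounds the decrease
   of the squared Newton decrement: lambda_{t+1}^2 <= lambda_t^2 D_t.  Along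
   the greedy coordinate the drop is at least mu/(dL) sigma, so
   sigma(G_{t+1}) <= q (sigma(G_t) - D_t) with q = 1 - mu/(dL).  Hence
   sum_i D_i / q^i <= sigma(G_0) <= dL/mu, and AM-GM applied to the weights
   D_i / q^i turns lambda_t^2 <= lambda_0^2 prod_i D_i into
   lambda_t^2 <= lambda_0^2 q^(t(t-1)/2) (dL/(t mu))^t. *)

Section QuadraticForm.
Variables (R : realType) (d : nat).
Implicit Types (M N P : 'M[R]_d) (u v w : 'cV[R]_d).
Local Notation e_ := (@e_ R d).

Lemma qfDl M u1 u2 v : qf M (u1 + u2) v = qf M u1 v + qf M u2 v.
Proof. by rewrite /qf linearD /= !mulmxDl mxE. Qed.

Lemma qfDr M u v1 v2 : qf M u (v1 + v2) = qf M u v1 + qf M u v2.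
Proof. by rewrite /qf mulmxDr mxE. Qed.

Lemma qfZl M a u v : qf M (a *: u) v = a * qf M u v.
Proof. by rewrite /qf linearZ /= -!scalemxAl mxE. Qed.

Lemma qfZr M a u v : qf M u (a *: v) = a * qf M u v.
Proof. by rewrite /qf -scalemxAr mxE. Qed.

Lemma qfNl M u v : qf M (- u) v = - qf M u v.
Proof. by rewrite -scaleN1r qfZl mulN1r. Qed.

Lemma qfNr M u v : qf M u (- v) = - qf M u v.
Proof. by rewrite -scaleN1r qfZr mulN1r. Qed.

Lemma qfBl M u1 u2 v : qf M (u1 - u2) v = qf M u1 v - qf M u2 v.
Proof. by rewrite qfDl qfNl. Qed.

Lemma qfBr M u v1 v2 : qf M u (v1 - v2) = qf M u v1 - qf M u v2.
Proof. by rewrite qfDr qfNr. Qed.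

Lemma qfMD M N u v : qf (M + N) u v = qf M u v + qf N u v.
Proof. by rewrite /qf mulmxDr mulmxDl mxE. Qed.

Lemma qfMB M N u v : qf (M - N) u v = qf M u v - qf N u v.
Proof. by rewrite qfMD /qf mulmxN mulNmx [X in _ + X]mxE. Qed.

Lemma qfMZ M a u v : qf (a *: M) u v = a * qf M u v.
Proof. by rewrite /qf -scalemxAr -scalemxAl mxE. Qed.

Lemma qf_trmx M u v : qf M^T v u = qf M u v.
Proof.
have tr11 (X : 'M[R]_1) : X 0 0 = X^T 0 0 by rewrite mxE.
by rewrite /qf [RHS]tr11 !trmx_mul !trmxK mulmxA.
Qed.

Lemma qf_sym M u v : M^T = M -> qf M u v = qf M v u.
Proof. by move=> MT; rewrite -qf_trmx MT. Qed.

Lemma qf_mulmx M N u v : qf (M *m N) u v = qf M u (N *m v).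
Proof. by rewrite /qf !mulmxA. Qed.

Lemma qf_outer M N u v w : qf (M *m u *m u^T *m N) v w = qf M v u * qf N u w.
Proof.
by rewrite /qf !mulmxA -!(mulmxA (v^T *m M *m u)) mxE big_ord1.
Qed.

Lemma mxtrace_outer M N u : \tr (M *m u *m u^T *m N) = qf (N *m M) u u.
Proof.
by rewrite -mulmxA mxtrace_mulC /mxtrace big_ord1 /qf !mulmxA.
Qed.

Lemma qf_e M i j : qf M (e_ i) (e_ j) = M i j.
Proof. by rewrite /qf /e_ trmx_delta -rowE -colE !mxE. Qed.

Lemma e_neq0 i : e_ i != 0.
Proof.
by apply/eqP => /matrixP/(_ i 0); rewrite /e_ !mxE !eqxx => /eqP; rewrite oner_eq0.
Qed.

Definition psd M := forall v, 0 <= qf M v v.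

Lemma psd1 : psd 1%:M.
Proof.
move=> v; rewrite /qf mulmx1 mxE; apply: sumr_ge0 => j _.
by rewrite mxE -expr2 sqr_ge0.
Qed.

Lemma qf1_gt0 v : v != 0 -> 0 < qf 1%:M v v.
Proof.
move=> vn0; rewrite lt0r psd1 andbT; apply: contra vn0.
rewrite /qf mulmx1 mxE psumr_eq0 => [/allP v0|j _]; last by rewrite mxE -expr2 sqr_ge0.
apply/eqP/matrixP => j k; rewrite ord1 !mxE.
by have := v0 j (mem_index_enum _); rewrite mxE -expr2 sqrf_eq0 => /eqP.
Qed.

Lemma pd_unitmx M : (forall v, v != 0 -> 0 < qf M v v) -> M \in unitmx.
Proof.
move=> pd; rewrite unitmxE unitfE; apply/negP => /det0P [r rn0 rM].
have : r^T != 0 by apply: contra rn0 => /eqP r0; rewrite -[r]trmxK r0 linear0.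
by move/pd; rewrite /qf trmxK rM mul0mx mxE ltxx.
Qed.

Lemma qf_CauchySchwarz M u v : M^T = M -> psd M ->
  qf M u v ^+ 2 <= qf M u u * qf M v v.
Proof.
move=> MT Mp.
have expand t : qf M (u + t *: v) (u + t *: v)
    = qf M u u + 2 * t * qf M u v + t ^+ 2 * qf M v v.
  by rewrite !qfDl !qfDr !qfZl !qfZr (qf_sym u v MT); ring.
have H t : 0 <= qf M u u + 2 * t * qf M u v + t ^+ 2 * qf M v v.
  by rewrite -expand.
move: H; set a := qf M u u; set b := qf M u v; set c := qf M v v => H.
have [c0 a0] : 0 <= c /\ 0 <= a by split; apply: Mp.
have [c_gt0|c_le0] := ltrP 0 c.
  have := H (- b / c).
  have -> : a + 2 * (- b / c) * b + (- b / c) ^+ 2 * c = a - b ^+ 2 / c.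
    by field; rewrite gt_eqF.
  by rewrite subr_ge0 ler_pdivrMr // mulrC.
have c_eq0 : c = 0 by apply/eqP; rewrite eq_le c_le0 c0.
have [-> | bn0] := eqVneq b 0; first by rewrite expr0n /= mulr_ge0.
have := H (- (a + 1) / (2 * b)).
have -> : a + 2 * (- (a + 1) / (2 * b)) * b + (- (a + 1) / (2 * b)) ^+ 2 * c = -1.
  by rewrite c_eq0; field; rewrite bn0.
by rewrite lerNr oppr0 ler10.
Qed.

Lemma psd_diag_eq0 P i j : P^T = P -> psd P -> P i i = 0 -> P i j = 0.
Proof.
move=> PT Pp Pii; have := qf_CauchySchwarz (e_ i) (e_ j) PT Pp.
rewrite !qf_e Pii mul0r => Pij2_le0.
by apply/eqP; rewrite -sqrf_eq0 eq_le Pij2_le0 sqr_ge0.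
Qed.

Lemma qf_congr M D u v : qf (M^T *m D *m M) u v = qf D (M *m u) (M *m v).
Proof. by rewrite /qf trmx_mul !mulmxA. Qed.

Lemma psd_congr M D : psd D -> psd (M^T *m D *m M).
Proof. by move=> Dp v; rewrite qf_congr. Qed.

Definition diag_support P := [set i | P i i != 0].

(* One step of symmetric Gaussian elimination with pivot [P i i]. *)
Lemma psd_peel P i : P^T = P -> psd P -> 0 < P i i ->
  let S := P - (P i i)^-1 *: (P *m e_ i *m (e_ i)^T *m P) in
  [/\ S^T = S, psd S & diag_support S \proper diag_support P].
Proof.
move=> PT Pp Pi S.
have qfS u : qf S u u = qf P u u - (P i i)^-1 * qf P u (e_ i) ^+ 2.
  by rewrite qfMB qfMZ qf_outer (qf_sym (e_ i) u PT) expr2.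
have Sjj j : S j j = P j j - (P i i)^-1 * P j i ^+ 2 by rewrite -[S j j]qf_e qfS !qf_e.
split.
- by rewrite /S linearB /= linearZ /= !trmx_mul !trmxK PT !mulmxA.
- move=> u; rewrite qfS subr_ge0 ler_pdivrMl // mulrC -[P i i]qf_e.
  exact: qf_CauchySchwarz.
apply/properP; split.
  apply/subsetP => j; rewrite !inE; apply: contra => /eqP Pjj.
  by rewrite Sjj Pjj (psd_diag_eq0 i PT Pp Pjj) expr0n /= mulr0 subrr.
exists i; rewrite !inE; first by rewrite gt_eqF.
by rewrite negbK Sjj expr2 mulKf ?subrr // gt_eqF.
Qed.

Lemma mxtrace_psd_mul_ge0 P D : P^T = P -> psd P -> psd D -> 0 <= \tr (P *m D).
Proof.
move=> + + Dp; move Pn : #|diag_support P| => n.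
elim/ltn_ind: n P Pn => n IH P Pn PT Pp.
have [P0 | [i]] := set_0Vmem (diag_support P).
  suff -> : P = 0 by rewrite mul0mx mxtrace0.
  apply/matrixP => j k; rewrite mxE; apply: psd_diag_eq0 => //.
  by have := in_set0 j; rewrite -P0 inE => /negbFE/eqP.
rewrite inE => Pi_neq0.
have Pi : 0 < P i i by rewrite lt0r Pi_neq0 -qf_e Pp.
have [ST Sp /proper_card Sn] := psd_peel PT Pp Pi.
set S := P - _ in ST Sp Sn.
rewrite -(subrK S P) mulmxDl mxtraceD; apply: addr_ge0; last first.
  by apply: (IH #|diag_support S|); rewrite -?Pn.
rewrite opprB addrC subrK -scalemxAl mxtraceZ -mulmxA mxtrace_outer.
rewrite mulr_ge0 ?invr_ge0 ?(ltW Pi) // -{1}PT.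
exact: psd_congr.
Qed.

End QuadraticForm.

Section Bfgs.
Variables (R : realType) (d : nat) (A : 'M[R]_d).
Hypothesis AT : A^T = A.
Hypothesis A_pd : forall v : 'cV[R]_d, v != 0 -> 0 < qf A v v.
Implicit Types (G : 'M[R]_d) (s u v : 'cV[R]_d).
Local Notation Ai := (invmx A).

Let A_unit : A \in unitmx := pd_unitmx A_pd.

Lemma invmxA_sym : Ai^T = Ai.
Proof. by rewrite trmx_inv AT. Qed.

Lemma qf_invmx_mulmx u v : qf Ai (A *m u) v = qf 1%:M u v.
Proof.
by rewrite /qf trmx_mul AT mulmx1 -!mulmxA (mulmxA A) mulmxV // mul1mx.
Qed.

Lemma qf_invmx_AA u : qf Ai (A *m u) (A *m u) = qf A u u.
Proof. by rewrite qf_invmx_mulmx -qf_mulmx mul1mx. Qed.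

Lemma invmx_pd v : v != 0 -> 0 < qf Ai v v.
Proof.
move=> v_neq0; rewrite -(mulKVmx A_unit v) qf_invmx_AA A_pd //.
by apply: contra v_neq0 => /eqP w0; rewrite -(mulKVmx A_unit v) w0 mulmx0.
Qed.

Lemma psd_invmx : psd Ai.
Proof.
move=> v; have [-> | /invmx_pd/ltW //] := eqVneq v 0.
by rewrite /qf mulmx0 mxE.
Qed.

Lemma BFGS_sym G u : G^T = G -> (BFGS A G u)^T = BFGS A G u.
Proof.
move=> GT; rewrite /BFGS !linearD /= !linearN /= !linearZ /=.
by rewrite !trmx_mul !trmxK GT AT !mulmxA.
Qed.

Lemma qf_BFGS G u v : G^T = G -> qf (BFGS A G u) v v =
  qf G v v - qf G u v ^+ 2 / qf G u u + qf A u v ^+ 2 / qf A u u.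
Proof.
move=> GT; rewrite /BFGS qfMD qfMB !qfMZ !qf_outer (qf_sym v u GT) (qf_sym v u AT).
by rewrite !expr2 ![_^-1 * _]mulrC.
Qed.

(* Used with a = u'Au, c = u'(G-A)u, p = v'(G-A)v, x = u'Av, y = u'(G-A)v;
   the last hypothesis is Cauchy-Schwarz for G - A. *)
Lemma BFGS_correction_ge0 (a c p x y : R) : 0 < a -> 0 <= c -> 0 <= p ->
  y ^+ 2 <= c * p -> 0 <= p - (x + y) ^+ 2 / (a + c) + x ^+ 2 / a.
Proof.
move=> a_gt0 c_ge0 p_ge0 cs.
have ac_gt0 : 0 < a + c by apply: ltr_wpDr.
have -> : p - (x + y) ^+ 2 / (a + c) + x ^+ 2 / a =
    (a * (c * p - y ^+ 2) + (a ^+ 2 * p - 2 * a * x * y + x ^+ 2 * c)) / (a * (a + c)).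
  by field; rewrite !gt_eqF.
apply: divr_ge0; last by apply/ltW/mulr_gt0.
apply: addr_ge0; first by apply: mulr_ge0; [exact: ltW | rewrite subr_ge0].
have [p0 | p_neq0] := eqVneq p 0.
  have y0 : y = 0 by apply/eqP; rewrite -sqrf_eq0 eq_le sqr_ge0 andbT -(mulr0 c) -p0.
  by rewrite p0 y0 !mulr0 subr0 add0r; apply: mulr_ge0; [exact: sqr_ge0 |].
have p_gt0 : 0 < p by rewrite lt0r p_neq0.
rewrite -(pmulr_rge0 _ p_gt0).
have -> : p * (a ^+ 2 * p - 2 * a * x * y + x ^+ 2 * c) =
    (a * p - x * y) ^+ 2 + x ^+ 2 * (c * p - y ^+ 2) by ring.
by apply: addr_ge0; [exact: sqr_ge0 | apply: mulr_ge0; [exact: sqr_ge0 | rewrite subr_ge0]].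
Qed.

Definition above_hessian G := G^T = G /\ forall v, qf A v v <= qf G v v.

Lemma above_hessian_psd G : above_hessian G -> psd (G - A).
Proof. by move=> [_ AG] v; rewrite qfMB subr_ge0. Qed.

Lemma above_hessian_gt0 G u : above_hessian G -> u != 0 -> 0 < qf G u u.
Proof. by move=> [_ AG] /A_pd/lt_le_trans; apply. Qed.

Lemma above_hessian_unitmx G : above_hessian G -> G \in unitmx.
Proof. by move=> AG; apply: pd_unitmx => v; apply: above_hessian_gt0. Qed.

Lemma above_hessian_BFGS G u : above_hessian G -> u != 0 ->
  above_hessian (BFGS A G u).
Proof.
move=> AG u_neq0; have [GT _] := AG; split; first exact: BFGS_sym.
have GAT : (G - A)^T = G - A by rewrite linearB /= GT AT.
move=> v; rewrite qf_BFGS //.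
have splitG w w' : qf G w w' = qf A w w' + qf (G - A) w w' by rewrite qfMB addrC subrK.
rewrite !splitG.
have := BFGS_correction_ge0 (qf A u v) (A_pd u_neq0) (above_hessian_psd AG u)
  (above_hessian_psd AG v) (qf_CauchySchwarz u v GAT (above_hessian_psd AG)).
lra.
Qed.

Definition sigma G := \tr (Ai *m G) - d%:R.

Lemma sigmaE G : sigma G = \tr (Ai *m (G - A)).
Proof. by rewrite /sigma mulmxBr linearB /= mulVmx // mxtrace1. Qed.

Lemma sigma_ge0 G : above_hessian G -> 0 <= sigma G.
Proof.
move=> AG; rewrite sigmaE mxtrace_psd_mul_ge0 //.
- exact: invmxA_sym.
- exact: psd_invmx.
- exact: above_hessian_psd.
Qed.

Lemma sigma_BFGS G u : above_hessian G -> u != 0 ->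
  sigma G - sigma (BFGS A G u) = qf Ai (G *m u) (G *m u) / qf G u u - 1.
Proof.
move=> AG u_neq0; have [GT _] := AG.
have qfAu_neq0 : qf A u u != 0 by rewrite gt_eqF ?A_pd.
rewrite /sigma /BFGS mulmxDr mulmxBr !mxtraceD linearN /= -!scalemxAr !mxtraceZ.
rewrite !mulmxA !mxtrace_outer !mulmxA mulmxV // mul1mx mulVf //.
rewrite -[X in qf (X *m Ai *m G)]GT qf_congr.
by rewrite [_^-1 * _]mulrC; ring.
Qed.

Lemma sigma_BFGS_ge G u : above_hessian G -> u != 0 ->
  qf G u u / qf A u u - 1 <= sigma G - sigma (BFGS A G u).
Proof.
move=> AG u_neq0; rewrite sigma_BFGS // lerD2r.
have [g_gt0 a_gt0] := (above_hessian_gt0 AG u_neq0, A_pd u_neq0).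
have := qf_CauchySchwarz (A *m u) (G *m u) invmxA_sym psd_invmx.
rewrite qf_invmx_mulmx -qf_mulmx mul1mx qf_invmx_AA.
by rewrite ler_pdivrMr // mulrAC ler_pdivlMr // -expr2 mulrC.
Qed.

Lemma sigma_BFGS_ge0 G u : above_hessian G -> u != 0 ->
  0 <= sigma G - sigma (BFGS A G u).
Proof.
move=> AG u_neq0; apply: le_trans (sigma_BFGS_ge AG u_neq0).
by rewrite subr_ge0 ler_pdivlMr ?A_pd // mul1r; case: AG.
Qed.

Lemma newton_step_decrease G s : above_hessian G -> s != 0 ->
  qf Ai (A *m s - G *m s) (A *m s - G *m s)
    <= qf Ai (G *m s) (G *m s) * (sigma G - sigma (BFGS A G s)).
Proof.
move=> AG s_neq0; have [GT AsG] := AG.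
rewrite sigma_BFGS // !qfBl !qfBr qf_invmx_AA (qf_sym (G *m s) (A *m s) invmxA_sym).
rewrite qf_invmx_mulmx -qf_mulmx mul1mx.
move: (AsG s) (above_hessian_gt0 AG s_neq0).
set a := qf A s s; set g := qf G s s; set h := qf Ai _ _ => a_le_g g_gt0.
rewrite -subr_ge0.
have -> : h * (h / g - 1) - (a - g - (g - h)) = ((h - g) ^+ 2 + g * (g - a)) / g.
  by field; rewrite gt_eqF.
apply: divr_ge0; last exact: ltW.
apply: addr_ge0; first exact: sqr_ge0.
by apply: mulr_ge0; [exact: ltW | rewrite subr_ge0].
Qed.

End Bfgs.

Section SpectralBounds.
Variables (R : realType) (d : nat) (mu L : R) (A : 'M[R]_d).
Hypotheses (mu_gt0 : 0 < mu) (mu_le_L : mu <= L) (AT : A^T = A).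
Hypothesis A_bounds :
  forall v : 'cV[R]_d, mu * qf 1%:M v v <= qf A v v /\ qf A v v <= L * qf 1%:M v v.
Implicit Types (G : 'M[R]_d) (v : 'cV[R]_d).
Local Notation e_ := (@e_ R d).
Local Notation Ai := (invmx A).

Let L_gt0 : 0 < L := lt_le_trans mu_gt0 mu_le_L.

Lemma A_pd v : v != 0 -> 0 < qf A v v.
Proof. by move=> /qf1_gt0/(mulr_gt0 mu_gt0)/lt_le_trans; apply; case: (A_bounds v). Qed.

Lemma qf_invmx_le v : qf Ai v v <= mu^-1 * qf 1%:M v v.
Proof.
set w := Ai *m v.
have vE : v = A *m w by rewrite /w mulKVmx ?pd_unitmx //; apply: A_pd.
have a_dot : qf A w w = qf 1%:M w v by rewrite vE -qf_mulmx mul1mx.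
have ai_dot : qf Ai v v = qf 1%:M w v by rewrite {1}vE (qf_invmx_mulmx AT A_pd).
(* 0 <= |v - mu w|^2 and mu |w|^2 <= w'Aw = w'v give mu w'v <= |v|^2. *)
have := psd1 (v - mu *: w); have [mu_n _] := A_bounds w.
rewrite ler_pdivlMl // ai_dot qfBl !qfBr !qfZl !qfZr (qf_sym v w (trmx1 _ _)) => sq.
have : mu * (mu * qf 1%:M w w) <= mu * qf A w w by rewrite ler_pM2l.
rewrite a_dot.
lra.
Qed.

Lemma sigma_le_mxtrace G : above_hessian A G -> sigma A G <= mu^-1 * \tr (G - A).
Proof.
move=> AG; set P := mu^-1%:M - Ai.
have PT : P^T = P by rewrite /P linearB /= tr_scalar_mx (invmxA_sym AT).
have Pp : psd P.
  by move=> v; rewrite /P qfMB -scalemx1 qfMZ subr_ge0 qf_invmx_le.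
have := mxtrace_psd_mul_ge0 PT Pp (above_hessian_psd AG).
by rewrite /P mulmxBl linearB /= mul_scalar_mx mxtraceZ subr_ge0 -(sigmaE A_pd).
Qed.

Lemma diag_le_L j : A j j <= L.
Proof. by have := (A_bounds (e_ j)).2; rewrite !qf_e mxE eqxx mulr1. Qed.

Lemma mxtrace_le_greedy G i : above_hessian A G -> greedy_index A G i ->
  \tr (G - A) <= d%:R * L * (qf G (e_ i) (e_ i) / qf A (e_ i) (e_ i) - 1).
Proof.
move=> AG greedy; set m := _ - 1.
have m_ge0 : 0 <= m.
  by rewrite subr_ge0 ler_pdivlMr ?A_pd ?e_neq0 // mul1r; case: AG.
apply: (@le_trans _ _ (\sum_(j < d) L * m)); last first.
  by rewrite sumr_const card_ord -mulrA mulr_natl.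
apply: ler_sum => j _.
have Ajj_gt0 : 0 < A j j by rewrite -qf_e A_pd ?e_neq0.
have := greedy j; rewrite -[X in _ <= X](subrK 1) -/m !qf_e ler_pdivrMr //.
rewrite !mxE mulrDl mul1r -lerBlDr => /le_trans; apply.
by rewrite mulrC ler_wpM2r // diag_le_L.
Qed.

Lemma sigma_greedy_BFGS G i : above_hessian A G -> greedy_index A G i ->
  sigma A (BFGS A G (e_ i)) <= (1 - mu / (d%:R * L)) * sigma A G.
Proof.
move=> AG greedy; set m := qf G (e_ i) (e_ i) / qf A (e_ i) (e_ i) - 1.
have d_gt0 : 0 < d%:R :> R by rewrite ltr0n (leq_ltn_trans (leq0n i)).
have drop := sigma_BFGS_ge AT A_pd AG (e_neq0 R i); rewrite -/m in drop.
have sigma_le : sigma A G <= mu^-1 * (d%:R * L * m).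
  apply: le_trans (sigma_le_mxtrace AG) _.
  by apply: ler_wpM2l; [rewrite invr_ge0 ltW | exact: mxtrace_le_greedy].
have key : mu / (d%:R * L) * sigma A G <= m.
  have c_ge0 : 0 <= mu / (d%:R * L) by rewrite ltW // divr_gt0 ?mulr_gt0.
  have -> : m = mu / (d%:R * L) * (mu^-1 * (d%:R * L * m)).
    by field; rewrite !gt_eqF.
  exact: ler_wpM2l.
lra.
Qed.

Lemma above_hessian_init : above_hessian A L%:M.
Proof.
split; first by rewrite tr_scalar_mx.
by move=> v; rewrite -scalemx1 qfMZ; case: (A_bounds v).
Qed.

Lemma sigma_init : sigma A L%:M <= d%:R * L / mu - d%:R.
Proof.
have tr_le : \tr Ai <= d%:R / mu.
  apply: (@le_trans _ _ (\sum_(j < d) mu^-1)).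
    apply: ler_sum => j _; rewrite -qf_e.
    by apply: le_trans (qf_invmx_le _) _; rewrite qf_e mxE eqxx mulr1.
  by rewrite sumr_const card_ord mulr_natl.
rewrite /sigma lerD2r mul_mx_scalar mxtraceZ mulrAC mulrC.
by apply: ler_wpM2r => //; apply: ltW.
Qed.

End SpectralBounds.

Section ProductRecurrence.
Variable R : realFieldType.

Lemma prod_le_mean_expn t (w : 'I_t -> R) : (forall i, 0 <= w i) ->
  \prod_(i < t) w i <= ((\sum_(i < t) w i) / t%:R) ^+ t.
Proof.
move=> w_ge0; have [AGM _] := leif_AGM (A := predT) (fun i _ => w_ge0 i).
by move: AGM; rewrite cardT size_enum_ord.
Qed.

Lemma prod_decrements_le (q : R) (sig D : nat -> R) t :
  0 < q -> (forall i, 0 <= D i) -> (forall i, 0 <= sig i) ->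
  (forall i, sig i.+1 <= q * (sig i - D i)) ->
  \prod_(i < t) D i <= q ^+ 'C(t, 2) * (sig 0%N / t%:R) ^+ t.
Proof.
move=> q_gt0 D_ge0 sig_ge0 sig_succ.
have qX_gt0 i : 0 < q ^+ i by rewrite exprn_gt0.
pose w (i : 'I_t) := D i / q ^+ i.
have w_ge0 i : 0 <= w i by rewrite divr_ge0 ?D_ge0 ?(ltW (qX_gt0 _)).
have budget n : \sum_(i < n) D i / q ^+ i + sig n / q ^+ n <= sig 0%N.
  elim: n => [|n IH]; first by rewrite big_ord0 add0r expr0 divr1.
  apply: le_trans IH; rewrite big_ord_recr /= -addrA lerD2l exprSr invfM mulrA.
  rewrite mulrAC -mulrDl ler_pM2r ?invr_gt0 // -lerBrDl ler_pdivrMr // mulrC.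
  exact: sig_succ.
have sum_w : \sum_(i < t) w i <= sig 0%N.
  by apply: le_trans (budget t); rewrite lerDl divr_ge0 ?sig_ge0 ?(ltW (qX_gt0 _)).
have -> : \prod_(i < t) D i = q ^+ 'C(t, 2) * \prod_(i < t) w i.
  rewrite -bin2_sum big_mkord -prodrXr -big_split /=.
  by apply: eq_bigr => i _; rewrite mulrC divfK ?gt_eqF.
rewrite ler_wpM2l ?exprn_ge0 ?(ltW q_gt0) //.
apply: le_trans (prod_le_mean_expn w_ge0) _.
rewrite lerXn2r ?nnegrE ?divr_ge0 ?sumr_ge0 //.
by rewrite ler_wpM2r ?invr_ge0.
Qed.

End ProductRecurrence.

Lemma sqrt_expn_powR (R : realType) (a : R) n :
  0 <= a -> Num.sqrt (a ^+ n) = a `^ (n%:R / 2).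
Proof. by move=> a_ge0; rewrite -powR12_sqrt ?exprn_ge0 // -powR_mulrn // -powRrM. Qed.

Section SharpenedBFGS.
Variables (R : realType) (d : nat) (mu L : R) (A : 'M[R]_d) (b : 'cV[R]_d).
Variables (x : nat -> 'cV[R]_d) (G : nat -> 'M[R]_d).
Hypotheses (d_gt0 : (0 < d)%N) (mu_gt0 : 0 < mu) (mu_le_L : mu <= L) (AT : A^T = A).
Hypothesis A_bounds :
  forall v : 'cV[R]_d, mu * qf 1%:M v v <= qf A v v /\ qf A v v <= L * qf 1%:M v v.
Hypothesis iterates : sharpened_bfgs_quad L A b x G.
Hypothesis grad_neq0 : forall t, grad_quad A b (x t) != 0.

Local Notation g t := (grad_quad A b (x t)).
Local Notation s t := (x t.+1 - x t).
Local Notation Gbar t := (BFGS A (G t) (s t)).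
Local Notation ndec2 v := (qf (invmx A) v v).
Local Notation q := (1 - mu / (d%:R * L)).

Let A_pd := A_pd mu_gt0 A_bounds.
Let L_gt0 : 0 < L := lt_le_trans mu_gt0 mu_le_L.

Lemma step_grad t : above_hessian A (G t) -> G t *m s t = - g t.
Proof.
move=> /(above_hessian_unitmx A_pd) Gu.
by rewrite (iterates.2 t).1 addrC addKr mulmxN mulKVmx.
Qed.

Lemma step_neq0 t : above_hessian A (G t) -> s t != 0.
Proof.
move=> AG; apply: contra (grad_neq0 t) => /eqP s0.
by rewrite -oppr_eq0 -(step_grad AG) s0 mulmx0.
Qed.

Lemma grad_succ t : above_hessian A (G t) -> g t.+1 = A *m s t - G t *m s t.
Proof. by move=> AG; rewrite step_grad // opprK /grad_quad mulmxBr addrA subrK. Qed.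

Lemma iterate_above_hessian t : above_hessian A (G t).
Proof.
elim: t => [|t IH]; first by rewrite iterates.1; apply: above_hessian_init.
have [i [_ ->]] := (iterates.2 t).2.
apply: (above_hessian_BFGS AT A_pd _ (e_neq0 R i)).
exact: (above_hessian_BFGS AT A_pd IH (step_neq0 IH)).
Qed.

Lemma ndec2_step t :
  ndec2 (g t.+1) <= ndec2 (g t) * (sigma A (G t) - sigma A (Gbar t)).
Proof.
have AG := iterate_above_hessian t.
rewrite grad_succ // -[g t]opprK -(step_grad AG) qfNl qfNr opprK.
exact: (newton_step_decrease AT A_pd AG (step_neq0 AG)).
Qed.

Lemma Gbar_above_hessian t : above_hessian A (Gbar t).
Proof.
have AG := iterate_above_hessian t.
exact: (above_hessian_BFGS AT A_pd AG (step_neq0 AG)).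
Qed.

Lemma sigma_step t : sigma A (G t.+1) <= q * sigma A (Gbar t).
Proof.
have [i [greedy ->]] := (iterates.2 t).2.
exact: (sigma_greedy_BFGS mu_gt0 mu_le_L AT A_bounds (Gbar_above_hessian t) greedy).
Qed.

Lemma sigma_drop_ge0 t : 0 <= sigma A (G t) - sigma A (Gbar t).
Proof.
have AG := iterate_above_hessian t.
exact: (sigma_BFGS_ge0 AT A_pd AG (step_neq0 AG)).
Qed.

Lemma ndec2_le_prod t :
  ndec2 (g t) <= ndec2 (g 0%N) * \prod_(i < t) (sigma A (G i) - sigma A (Gbar i)).
Proof.
elim: t => [|t IH]; first by rewrite big_ord0 mulr1.
rewrite big_ord_recr /= mulrA; apply: le_trans (ndec2_step t) _.
by rewrite ler_wpM2r ?sigma_drop_ge0.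
Qed.

Lemma sigma_init_iterate : sigma A (G 0%N) <= d%:R * L / mu - d%:R.
Proof. by rewrite iterates.1; apply: sigma_init. Qed.

(* Since lambda_1 > 0 the first drop of sigma is positive, so sigma(G_0) > 0,
   which by sigma_init forces mu <= d mu < d L. *)
Lemma rate_gt0 : 0 < q.
Proof.
have drop0_gt0 : 0 < sigma A (G 0%N) - sigma A (Gbar 0%N).
  rewrite ltNge; apply/negP => drop0_le0.
  have := le_trans (ndec2_step 0) (mulr_ge0_le0 (psd_invmx AT A_pd _) drop0_le0).
  by rewrite leNgt (invmx_pd AT A_pd (grad_neq0 1)).
have dmu_lt_dL : d%:R * mu < d%:R * L.
  rewrite -ltr_pdivlMr //; have := sigma_init_iterate.
  have := sigma_ge0 AT A_pd (Gbar_above_hessian 0); lra.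
rewrite subr_gt0 ltr_pdivrMr ?mulr_gt0 ?ltr0n // mul1r.
by apply: le_lt_trans dmu_lt_dL; rewrite ler_peMl ?ler1n ?ltW.
Qed.

Lemma ndec2_rate t :
  ndec2 (g t) <= ndec2 (g 0%N) * (q ^+ 'C(t, 2) * (d%:R * L / (t%:R * mu)) ^+ t).
Proof.
apply: le_trans (ndec2_le_prod t) _; rewrite ler_wpM2l ?(psd_invmx AT A_pd) //.
have sigma_iter_ge0 i := sigma_ge0 AT A_pd (iterate_above_hessian i).
apply: le_trans (prod_decrements_le (sig := fun i => sigma A (G i)) t
  rate_gt0 sigma_drop_ge0 sigma_iter_ge0 _) _.
  by move=> i /=; rewrite subKr sigma_step.
rewrite ler_wpM2l ?exprn_ge0 ?(ltW rate_gt0) //.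
apply: lerXn2r; rewrite ?nnegrE ?divr_ge0 ?mulr_ge0 ?(ltW L_gt0) ?(ltW mu_gt0) //.
rewrite invfM mulrA mulrAC ler_wpM2r ?invr_ge0 //.
by apply: le_trans sigma_init_iterate _; rewrite gerBl.
Qed.

End SharpenedBFGS.

Unset Implicit Arguments.

Theorem theorem2 (R : realType) (d : nat) (mu L : R) (A : 'M[R]_d) (b : 'cV[R]_d)
  (x : nat -> 'cV[R]_d) (G : nat -> 'M[R]_d) :
  (1 <= d)%N -> 0 < mu -> mu <= L ->
  A^T = A ->
  (forall v : 'cV[R]_d, mu * qf 1%:M v v <= qf A v v /\ qf A v v <= L * qf 1%:M v v) ->
  sharpened_bfgs_quad L A b x G ->
  (forall t : nat, grad_quad A b (x t) != 0) ->
  forall t : nat, (1 <= t)%N ->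
    newton_decr A b (x t) <=
      (1 - mu / (d%:R * L)) `^ ((t * (t - 1))%:R / 4)
      * (d%:R * L / (t%:R * mu)) `^ (t%:R / 2)
      * newton_decr A b (x 0%N).
Proof.
move=> d_gt0 mu_gt0 mu_le_L AT A_bounds iterates grad_neq0 t t_gt0.
set q := 1 - mu / (d%:R * L); set K := d%:R * L / (t%:R * mu).
have q_ge0 : 0 <= q.
  exact/ltW/(rate_gt0 d_gt0 mu_gt0 mu_le_L AT A_bounds iterates grad_neq0).
have K_ge0 : 0 <= K.
  by rewrite ltW // divr_gt0 ?mulr_gt0 ?ltr0n // (lt_le_trans mu_gt0).
have ndec2_ge0 := psd_invmx AT (A_pd mu_gt0 A_bounds) (grad_quad A b (x 0%N)).
have -> : (t * (t - 1))%:R / 4 = 'C(t, 2)%:R / 2 :> R.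
  by rewrite subn1 -(bin1 t.-1) mul_bin_diag natrM; field.
rewrite /newton_decr -!sqrt_expn_powR // -!sqrtrM ?mulr_ge0 ?exprn_ge0 //.
rewrite ler_sqrt ?mulr_ge0 ?exprn_ge0 // mulrC.
exact: (ndec2_rate d_gt0 mu_gt0 mu_le_L AT A_bounds iterates grad_neq0).
Qed.
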